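(* Let $1\le p\le\infty$ and $a\in\mathbb{D}=\{z\in\mathbb{C}:|z|<1\}$, and let $R(p,a)$ be the least constant such that $b_{\mathbb{D},p}(T_a(z_1),T_a(z_2))\le R(p,a)\,b_{\mathbb{D},p}(z_1,z_2)$ for all $z_1,z_2\in\mathbb{D}$, where $T_a(z)=\frac{z-a}{1-\overline{a}z}$. Then $R(p,a)\ge 1+|a|$.
   Context: For $z_1,z_2\in\mathbb{D}$ and $1\le p<\infty$, $b_{\mathbb{D},p}(z_1,z_2)=\sup_{z\in\partial\mathbb{D}}\frac{|z_1-z_2|}{\sqrt[p]{|z_1-z|^p+|z-z_2|^p}}$, and $b_{\mathbb{D},\infty}(z_1,z_2)=\sup_{z\in\partial\mathbb{D}}\frac{|z_1-z_2|}{\max\{|z_1-z|,|z_2-z|\}}$. (Such a finite least constant exists, since $T_a$ is Lipschitz with respect to $b_{\mathbb{D},p}$.) *)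

From mathcomp Require Import all_boot all_order all_algebra.
From mathcomp Require Import all_classical all_reals all_analysis.
From mathcomp Require Import complex.
Set Implicit Arguments. Unset Strict Implicit. Unset Printing Implicit Defensive.
Import Order.TTheory GRing.Theory Num.Theory.
Local Open Scope ring_scope.
Local Open Scope classical_set_scope.

Section Defs.
Variable R : realType.
Local Notation C := R[i].

Definition cabs (z : C) : R := ComplexField.Normc.normc z.

Definition unit_disk : set C := [set z | cabs z < 1].
Definition unit_circle : set C := [set z | cabs z = 1].

(* the ratio inside the supremum defining b_{D,p}; p = +oo is the max case *)
Definition bratio (p : \bar R) (z1 z2 z : C) : R :=
  match p with
  | EFin q => cabs (z1 - z2) /
      powR (powR (cabs (z1 - z)) q + powR (cabs (z - z2)) q) q^-1
  | _ => cabs (z1 - z2) / Num.max (cabs (z1 - z)) (cabs (z2 - z))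
  end.

Definition bD (p : \bar R) (z1 z2 : C) : R :=
  sup [set bratio p z1 z2 z | z in unit_circle].

Definition Tmob (a z : C) : C := (z - a) / (1 - conjc a * z).

Definition lip_const (p : \bar R) (a : C) (K : R) : Prop :=
  forall z1 z2, unit_disk z1 -> unit_disk z2 ->
    bD p (Tmob a z1) (Tmob a z2) <= K * bD p z1 z2.

Definition Rpa (p : \bar R) (a : C) : R := inf [set K | lip_const p a K].
End Defs.

(* T_a maps the unit circle onto itself (its inverse is T_(-a)), and on the closed
   disk |T_a z - T_a w| = (1 - |a|^2) |z - w| / (|1 - conj(a) z| |1 - conj(a) w|),
   where both factors in the denominator lie in [1 - |a|, 1 + |a|].  So T_a is
   bi-Lipschitz for the euclidean distance, and comparing the ratios defining
   b_(D,p) boundary point by boundary point shows that T_a is Lipschitz for b_(D,p).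
   For the lower bound write a = -|a| u with |u| = 1.  T_a maps 0 to |a| u and
   d u to s u, s = (d + |a|) / (1 + |a| d).  Testing b_(D,p)(|a| u, s u) at the
   boundary point u, and bounding b_(D,p)(0, d u) by d / ((1 - d) 2^(1/p)), every
   Lipschitz constant K satisfies (1 + |a|)(1 - d) <= K (1 + |a| d); let d -> 0. *)

From mathcomp Require Import all_boot all_order all_algebra.
From mathcomp Require Import all_classical all_reals all_analysis.
From mathcomp Require Import complex.
From mathcomp Require Import ring lra.
Import Order.TTheory GRing.Theory Num.Theory.
Set Implicit Arguments. Unset Strict Implicit.
Local Open Scope ring_scope.
Local Open Scope complex_scope.

Lemma ler_wdiv2l (R : numFieldType) (c m n : R) :
  0 <= c -> 0 < m -> m <= n -> c / n <= c / m.
Proof. by move=> c0 m0 mn; rewrite ler_wpM2l // lef_pV2 ?posrE // (lt_le_trans m0 mn). Qed.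

Section ComplexModulus.
Variable R : realType.
Implicit Types z w : R[i].

Lemma cabsE z : (cabs z)%:C = `|z|.
Proof. by []. Qed.

Lemma cabs_ge0 z : 0 <= cabs z.
Proof. by case: z => x y; rewrite /cabs /= sqrtr_ge0. Qed.

Lemma cabs0 : cabs (0 : R[i]) = 0.
Proof. exact: ComplexField.Normc.normc0. Qed.

Lemma cabs1 : cabs (1 : R[i]) = 1.
Proof. exact: ComplexField.Normc.normc1. Qed.

Lemma cabs_eq0 z : (cabs z == 0) = (z == 0).
Proof. by rewrite -(inj_eq (@complexI R)) cabsE normr_eq0. Qed.

Lemma cabsM z w : cabs (z * w) = cabs z * cabs w.
Proof. exact: ComplexField.Normc.normcM. Qed.

Lemma cabsV z : cabs z^-1 = (cabs z)^-1.
Proof. exact: ComplexField.Normc.normcV. Qed.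

Lemma cabsN z : cabs (- z) = cabs z.
Proof. exact: (@normcN R z). Qed.

Lemma cabs_distC z w : cabs (z - w) = cabs (w - z).
Proof. by rewrite -cabsN opprB. Qed.

Lemma ler_cabsD z w : cabs (z + w) <= cabs z + cabs w.
Proof. exact: (@le_normcD R z w). Qed.

Lemma lerB_cabs z w : cabs z - cabs w <= cabs (z - w).
Proof. by have := ler_cabsD (z - w) w; rewrite subrK lerBlDr. Qed.

Lemma cabs_real (x : R) : cabs x%:C = `|x|.
Proof. by apply: (@complexI R); rewrite cabsE normc_def /= expr0n addr0 sqrtr_sqr. Qed.

Lemma cabs_conjc z : cabs (conjc z) = cabs z.
Proof. by case: z => x y; rewrite /cabs /= sqrrN. Qed.

Lemma cabs_sqr z : (cabs z ^+ 2)%:C = z * conjc z.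
Proof. by rewrite -sqr_normc -cabsE -rmorphXn. Qed.

Lemma cabs_polar z : exists2 v : R[i], cabs v = 1 & z = (cabs z)%:C * v.
Proof.
have [->|z0] := eqVneq z 0; first by exists 1; rewrite ?cabs1 // cabs0 mul0r.
have rz0 : (cabs z)%:C != 0 by rewrite cabsE normr_eq0.
exists (z / (cabs z)%:C); last by rewrite mulrC divfK.
by rewrite cabsM cabsV cabs_real ger0_norm ?cabs_ge0 // divff // cabs_eq0.
Qed.

End ComplexModulus.

Section PairNorm.
Variable R : realType.
Variable p : \bar R.
Hypothesis p_gt0 : (0 < p)%E.
Implicit Types x y l : R.

Definition pnorm2 x y : R :=
  match p with
  | EFin q => powR (powR x q + powR y q) q^-1
  | _ => Num.max x y
  end.

Lemma pnorm2M l x y : 0 <= l -> 0 <= x -> 0 <= y ->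
  pnorm2 (l * x) (l * y) = l * pnorm2 x y.
Proof.
rewrite /pnorm2; case: p p_gt0 => [q||] //= q_gt0 l0 x0 y0; last by rewrite maxr_pMr.
rewrite lte_fin in q_gt0.
rewrite !powRM // -mulrDr powRM ?addr_ge0 ?powR_ge0 //.
by rewrite -powRrM divff ?gt_eqF // powRr1.
Qed.

Lemma ler_pnorm2 x y x' y' : 0 <= x -> 0 <= y -> x <= x' -> y <= y' ->
  pnorm2 x y <= pnorm2 x' y'.
Proof.
rewrite /pnorm2; case: p p_gt0 => [q||] //= q_gt0 x0 y0 xx' yy'; last first.
  by rewrite ge_max !le_max xx' yy' orbT.
rewrite lte_fin in q_gt0.
have q_ge0 := ltW q_gt0.
apply: ge0_ler_powR; rewrite ?invr_ge0 ?nnegrE ?addr_ge0 ?powR_ge0 //.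
have [x'0 y'0] := (le_trans x0 xx', le_trans y0 yy').
by apply: lerD; apply: ge0_ler_powR; rewrite ?nnegrE.
Qed.

Lemma pnorm2_gel x y : 0 <= x -> 0 <= y -> x <= pnorm2 x y.
Proof.
rewrite /pnorm2; case: p p_gt0 => [q||] //= q_gt0 x0 y0; last by rewrite le_max lexx.
rewrite lte_fin in q_gt0.
rewrite -[leLHS]powRr1 // -(divff (lt0r_neq0 q_gt0)) powRrM.
have q_ge0 := ltW q_gt0.
apply: ge0_ler_powR; rewrite ?invr_ge0 ?nnegrE ?addr_ge0 ?powR_ge0 //.
by rewrite lerDl powR_ge0.
Qed.

Lemma pnorm2_ge0 x y : 0 <= x -> 0 <= y -> 0 <= pnorm2 x y.
Proof. by move=> x0 y0; apply: le_trans x0 (pnorm2_gel x0 y0). Qed.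

Lemma pnorm2_diag x : 0 <= x -> pnorm2 x x = x * pnorm2 1 1.
Proof. by move=> x0; rewrite -pnorm2M ?mulr1. Qed.

Lemma pnorm211_gt0 : 0 < pnorm2 1 1.
Proof. by apply: lt_le_trans ltr01 (pnorm2_gel ler01 ler01). Qed.

End PairNorm.

Section BarrlundRatio.
Variable R : realType.
Variable p : \bar R.
Hypothesis p_gt0 : (0 < p)%E.
Implicit Types z w : R[i].

Lemma bratioE z1 z2 z :
  bratio p z1 z2 z = cabs (z1 - z2) / pnorm2 p (cabs (z1 - z)) (cabs (z - z2)).
Proof. by rewrite /pnorm2; case: p p_gt0 => [q||] //= _; rewrite (cabs_distC z2). Qed.

Lemma bratio_ge0 z1 z2 z : 0 <= bratio p z1 z2 z.
Proof. by rewrite bratioE divr_ge0 ?pnorm2_ge0 ?cabs_ge0. Qed.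

Lemma unit_circle1 : unit_circle (1 : R[i]).
Proof. exact: cabs1. Qed.

Lemma unit_circle_le1 z : unit_circle z -> cabs z <= 1.
Proof. by rewrite /unit_circle /= => ->. Qed.

Lemma unit_disk_gap z1 : unit_disk z1 -> 0 < 1 - cabs z1.
Proof. by rewrite subr_gt0. Qed.

Lemma bratio_den_ge z1 z2 z : unit_circle z ->
  1 - cabs z1 <= pnorm2 p (cabs (z1 - z)) (cabs (z - z2)).
Proof.
move=> zC; apply: le_trans (pnorm2_gel p_gt0 (cabs_ge0 _) (cabs_ge0 _)).
by rewrite cabs_distC; have := lerB_cabs z z1; rewrite zC.
Qed.

Lemma bratio_le_bD z1 z2 z : unit_disk z1 -> unit_circle z ->
  bratio p z1 z2 z <= bD p z1 z2.
Proof.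
move=> z1D zC; apply: ub_le_sup; last by exists z.
exists (cabs (z1 - z2) / (1 - cabs z1)) => _ [w wC <-].
by rewrite bratioE ler_wdiv2l ?cabs_ge0 ?unit_disk_gap ?bratio_den_ge.
Qed.

Lemma bD_le z1 z2 M : (forall z, unit_circle z -> bratio p z1 z2 z <= M) ->
  bD p z1 z2 <= M.
Proof.
move=> le_M; apply: ge_sup; first by exists (bratio p z1 z2 1), 1; [apply: unit_circle1|].
by move=> _ [z zC <-]; apply: le_M.
Qed.

Lemma bD_ge0 z1 z2 : unit_disk z1 -> 0 <= bD p z1 z2.
Proof.
by move=> z1D; apply: le_trans (bratio_ge0 z1 z2 1) (bratio_le_bD _ z1D unit_circle1).
Qed.

Lemma bratio_bilipschitz L z1 z2 z w1 w2 w : 0 < L ->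
  unit_disk z1 -> unit_circle z ->
  cabs (w1 - w2) <= L * cabs (z1 - z2) ->
  L^-1 * cabs (z1 - z) <= cabs (w1 - w) ->
  L^-1 * cabs (z - z2) <= cabs (w - w2) ->
  bratio p w1 w2 w <= L ^+ 2 * bratio p z1 z2 z.
Proof.
move=> L_gt0 z1D zC le_num le_1 le_2; rewrite !bratioE.
set N := pnorm2 p (cabs (z1 - z)) (cabs (z - z2)).
have N_gt0 : 0 < N by apply: lt_le_trans (unit_disk_gap z1D) (bratio_den_ge z1 z2 zC).
have Li_ge0 : 0 <= L^-1 by rewrite invr_ge0 ltW.
have le_den : L^-1 * N <= pnorm2 p (cabs (w1 - w)) (cabs (w - w2)).
  by rewrite -pnorm2M ?cabs_ge0 //; apply: ler_pnorm2; rewrite ?mulr_ge0 ?cabs_ge0.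
have -> : L ^+ 2 * (cabs (z1 - z2) / N) = L * cabs (z1 - z2) / (L^-1 * N).
  by field; rewrite !lt0r_neq0.
apply: ler_pM; rewrite ?cabs_ge0 ?invr_ge0 ?pnorm2_ge0 ?cabs_ge0 //.
have LN_gt0 : 0 < L^-1 * N by rewrite mulr_gt0 ?invr_gt0.
by rewrite lef_pV2 ?posrE // (lt_le_trans LN_gt0 le_den).
Qed.

Lemma bD_bilipschitz (f : R[i] -> R[i]) L z1 z2 : 0 < L ->
  (forall w, unit_circle w -> exists2 z, unit_circle z & f z = w) ->
  (forall z w, cabs z <= 1 -> cabs w <= 1 ->
     L^-1 * cabs (z - w) <= cabs (f z - f w) <= L * cabs (z - w)) ->
  unit_disk z1 -> unit_disk z2 -> bD p (f z1) (f z2) <= L ^+ 2 * bD p z1 z2.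
Proof.
move=> L_gt0 f_onto f_bilip z1D z2D; apply: bD_le => _ /f_onto[z zC <-].
have z1_le1 : cabs z1 <= 1 := ltW z1D.
have z2_le1 : cabs z2 <= 1 := ltW z2D.
have z_le1 := unit_circle_le1 zC.
have /andP[_ le_num] := f_bilip _ _ z1_le1 z2_le1.
have /andP[le_1 _] := f_bilip _ _ z1_le1 z_le1.
have /andP[le_2 _] := f_bilip _ _ z_le1 z2_le1.
apply: le_trans (bratio_bilipschitz L_gt0 z1D zC le_num le_1 le_2) _.
by apply: ler_wpM2l; [rewrite exprn_ge0 // ltW | exact: bratio_le_bD].
Qed.

End BarrlundRatio.

Section Moebius.
Variable R : realType.
Variable a : R[i].
Hypothesis a_lt1 : cabs a < 1.
Local Notation r := (cabs a).
Implicit Types z w : R[i].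

Lemma Tmob_den_bounds z : cabs z <= 1 ->
  1 - r <= cabs (1 - conjc a * z) <= 1 + r.
Proof.
move=> z_le1; have az_le : cabs (conjc a * z) <= r.
  by rewrite cabsM cabs_conjc ler_piMr ?cabs_ge0.
apply/andP; split.
  by apply: le_trans (lerB_cabs _ _); rewrite cabs1 lerB.
by apply: le_trans (ler_cabsD _ _) _; rewrite cabs1 cabsN lerD2l.
Qed.

Lemma Tmob_den_gt0 z : cabs z <= 1 -> 0 < cabs (1 - conjc a * z).
Proof.
move=> /Tmob_den_bounds /andP[+ _]; apply: lt_le_trans.
by rewrite subr_gt0.
Qed.

Lemma Tmob_den_neq0 z : cabs z <= 1 -> 1 - conjc a * z != 0.
Proof. by move=> /Tmob_den_gt0; rewrite -cabs_eq0 => /lt0r_neq0. Qed.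

Lemma cabs_Tmob_sub z w : cabs z <= 1 -> cabs w <= 1 ->
  cabs (Tmob a z - Tmob a w) =
  (1 - r ^+ 2) * cabs (z - w) / (cabs (1 - conjc a * z) * cabs (1 - conjc a * w)).
Proof.
move=> z_le1 w_le1.
have -> : Tmob a z - Tmob a w =
    (1 - conjc a * a) * (z - w) / ((1 - conjc a * z) * (1 - conjc a * w)).
  by rewrite /Tmob; field; rewrite !Tmob_den_neq0.
have -> : 1 - conjc a * a = (1 - r ^+ 2)%:C by rewrite mulrC -cabs_sqr rmorphB.
have r2_ge0 : 0 <= 1 - r ^+ 2 by rewrite subr_ge0 exprn_ile1 ?cabs_ge0 ?ltW.
by rewrite !(cabsM, cabsV) cabs_real ger0_norm.
Qed.

Lemma Tmob_bilipschitz z w : cabs z <= 1 -> cabs w <= 1 ->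
  ((1 + r) / (1 - r))^-1 * cabs (z - w) <= cabs (Tmob a z - Tmob a w)
    <= (1 + r) / (1 - r) * cabs (z - w).
Proof.
move=> z_le1 w_le1; rewrite cabs_Tmob_sub // mulrAC.
have /andP[Az_ge Az_le] := Tmob_den_bounds z_le1.
have /andP[Aw_ge Aw_le] := Tmob_den_bounds w_le1.
set Az := cabs (1 - _ * z) in Az_ge Az_le *.
set Aw := cabs (1 - _ * w) in Aw_ge Aw_le *.
have r_ge0 := cabs_ge0 a; have r_lt1 : 0 < 1 - r by rewrite subr_gt0.
have AA_gt0 : 0 < Az * Aw by rewrite mulr_gt0 // (lt_le_trans r_lt1).
have -> : 1 - r ^+ 2 = (1 - r) * (1 + r) by ring.
apply/andP; split; apply: ler_wpM2r; rewrite ?cabs_ge0 //.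
  rewrite invf_div ler_pdivlMr // mulrAC ler_pdivrMr; last by rewrite ltr_wpDr.
  by rewrite -mulrA ler_pM2l //; apply: ler_pM; rewrite ?cabs_ge0.
rewrite ler_pdivrMr // mulrAC ler_pdivlMr //.
rewrite [(1 - r) * _]mulrC -mulrA ler_pM2l ?ltr_wpDr //.
by apply: ler_pM => //; apply: ltW.
Qed.

Lemma Tmob_circle w : unit_circle w -> unit_circle (Tmob a w).
Proof.
rewrite /unit_circle /Tmob /= => w1; have w_le1 : cabs w <= 1 by rewrite w1.
have ww : w * conjc w = 1 by rewrite -cabs_sqr w1 expr1n.
have -> : w - a = w * conjc (1 - conjc a * w).
  by rewrite rmorphB rmorph1 rmorphM /= conjcK mulrBr mulr1 mulrCA ww mulr1.
by rewrite !(cabsM, cabsV) cabs_conjc w1 mul1r divff // cabs_eq0 Tmob_den_neq0.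
Qed.

Lemma TmobNK w : cabs w <= 1 -> Tmob a (Tmob (- a) w) = w.
Proof.
move=> w_le1; have den_w : 1 + conjc a * w != 0.
  by rewrite -[w]opprK mulrN Tmob_den_neq0 ?cabsN.
have den_a : 1 - conjc a * a != 0 by rewrite Tmob_den_neq0 ?ltW.
rewrite /Tmob; have -> : conjc (- a) = - conjc a by rewrite rmorphN.
rewrite mulNr !opprK; move: den_w den_a; move: (conjc a) => b den_w den_a.
field; rewrite den_w /=.
by have -> : 1 + b * w - b * (w + a) = 1 - b * a by ring.
Qed.

End Moebius.

Lemma Tmob_onto_circle (R : realType) (a w : R[i]) : cabs a < 1 ->
  unit_circle w -> exists2 z, unit_circle z & Tmob a z = w.
Proof.
move=> a_lt1 wC; exists (Tmob (- a) w); first by apply: Tmob_circle; rewrite ?cabsN.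
by rewrite TmobNK // unit_circle_le1.
Qed.

(* Only needed because [Rpa] is an infimum and [inf set0 = 0]. *)
Lemma lip_const_Tmob (R : realType) (p : \bar R) (a : R[i]) :
  (0 < p)%E -> cabs a < 1 ->
  lip_const p a (((1 + cabs a) / (1 - cabs a)) ^+ 2).
Proof.
move=> p_gt0 a_lt1 z1 z2 z1D z2D; apply: bD_bilipschitz => //.
- by rewrite divr_gt0 ?subr_gt0 // ltr_wpDr ?cabs_ge0.
- by move=> w; apply: Tmob_onto_circle.
- exact: Tmob_bilipschitz.
Qed.

Section LowerBound.
Variable R : realType.
Variable p : \bar R.
Hypothesis p_gt0 : (0 < p)%E.
Variable u : R[i].
Hypothesis u1 : cabs u = 1.
Implicit Types x y d r : R.

Lemma cabs_scale x : cabs (x%:C * u) = `|x|.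
Proof. by rewrite cabsM u1 mulr1 cabs_real. Qed.

Lemma cabs_scale_sub x y : cabs (x%:C * u - y%:C * u) = `|x - y|.
Proof. by rewrite -mulrBl -rmorphB cabs_scale. Qed.

(* No condition on [1 + r * x]: both sides are 0 when it vanishes. *)
Lemma Tmob_diameter r x :
  Tmob (- (r%:C * u)) (x%:C * u) = ((x + r) / (1 + r * x))%:C * u.
Proof.
have uu : conjc u * u = 1 by rewrite mulrC -cabs_sqr u1 expr1n.
have den : 1 - conjc (- (r%:C * u)) * (x%:C * u) = (1 + r * x)%:C.
  have -> : conjc (- (r%:C * u)) = - (r%:C * conjc u).
    by rewrite rmorphN rmorphM; congr (- (_ * _)); apply: conjc_real.
  by rewrite mulNr opprK mulrACA uu mulr1 rmorphD rmorph1 rmorphM.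
by rewrite /Tmob den opprK -mulrDl -rmorphD fmorph_div mulrAC.
Qed.

Lemma bD_diameter_ge x y : -1 < x -> x <= y -> y < 1 ->
  (y - x) / ((1 - x) * pnorm2 p 1 1) <= bD p (x%:C * u) (y%:C * u).
Proof.
move=> x_gtN1 le_xy y_lt1; have x_lt1 := le_lt_trans le_xy y_lt1.
have [x_le1 y_le1] := (ltW x_lt1, ltW y_lt1).
have xuD : unit_disk (x%:C * u) by rewrite /unit_disk /= cabs_scale ltr_norml x_gtN1.
apply: le_trans (bratio_le_bD p_gt0 _ xuD u1).
rewrite bratioE //.
have -> : x%:C * u - u = x%:C * u - 1%:C * u by rewrite mul1r.
have -> : u - y%:C * u = 1%:C * u - y%:C * u by rewrite mul1r.
rewrite !cabs_scale_sub distrC [`|x - 1|]distrC !ger0_norm ?subr_ge0 //.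
apply: ler_wdiv2l; rewrite ?subr_ge0 //.
  by apply: lt_le_trans (pnorm2_gel _ _ _); rewrite ?subr_gt0 ?subr_ge0.
by rewrite -pnorm2_diag ?subr_ge0 //; apply: ler_pnorm2; rewrite ?subr_ge0 ?lerB.
Qed.

Lemma bD_center_le d : 0 <= d < 1 ->
  bD p 0 (d%:C * u) <= d / ((1 - d) * pnorm2 p 1 1).
Proof.
move=> /andP[d_ge0 d_lt1]; have d_le1 := ltW d_lt1; apply: bD_le => z zC; rewrite bratioE //.
have d_le : 1 - d <= cabs (z - d%:C * u).
  by apply: le_trans (lerB_cabs _ _); rewrite zC cabs_scale ger0_norm.
rewrite !sub0r !cabsN zC cabs_scale ger0_norm //.
apply: ler_wdiv2l => //; first by rewrite mulr_gt0 ?pnorm211_gt0 ?subr_gt0.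
rewrite -pnorm2_diag ?subr_ge0 //.
by apply: ler_pnorm2; rewrite ?subr_ge0 // gerBl.
Qed.

Lemma bD_Tmob_diameter_ge r d : 0 <= r < 1 -> 0 < d < 1 ->
  d * (1 + r) / ((1 + r * d) * pnorm2 p 1 1) <=
  bD p (Tmob (- (r%:C * u)) 0) (Tmob (- (r%:C * u)) (d%:C * u)).
Proof.
move=> /andP[r_ge0 r_lt1] /andP[d_gt0 d_lt1].
have rd_gt0 : 0 < 1 + r * d by rewrite ltr_wpDr // mulr_ge0 // ltW.
have T0 : Tmob (- (r%:C * u)) 0 = r%:C * u.
  by have := Tmob_diameter r 0; rewrite rmorph0 mul0r add0r mulr0 addr0 divr1.
rewrite T0 Tmob_diameter; set s := (d + r) / (1 + r * d).
have s_r : s - r = d * (1 - r ^+ 2) / (1 + r * d) by rewrite /s; field; rewrite lt0r_neq0.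
have s_1 : 1 - s = (1 - r) * (1 - d) / (1 + r * d) by rewrite /s; field; rewrite lt0r_neq0.
have r2_gt0 : 0 < 1 - r ^+ 2 by rewrite subr_gt0 expr_lt1.
have s_gt_r : r < s by rewrite -subr_gt0 s_r !mulr_gt0 ?invr_gt0.
have s_lt1 : s < 1 by rewrite -subr_gt0 s_1 !mulr_gt0 ?invr_gt0 ?subr_gt0.
have r_gtN1 : -1 < r by apply: lt_le_trans r_ge0; rewrite oppr_lt0.
have M_gt0 := pnorm211_gt0 p_gt0.
have -> : d * (1 + r) / ((1 + r * d) * pnorm2 p 1 1) = (s - r) / ((1 - r) * pnorm2 p 1 1).
  by rewrite s_r; field; rewrite !lt0r_neq0 ?subr_gt0.
exact: bD_diameter_ge r_gtN1 (ltW s_gt_r) s_lt1.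
Qed.

Lemma lip_const_diameter r K : 0 <= r < 1 -> lip_const p (- (r%:C * u)) K ->
  forall d, 0 < d < 1 -> (1 + r) * (1 - d) <= K * (1 + r * d).
Proof.
move=> r01 lipK d d01; have /andP[r_ge0 r_lt1] := r01; have /andP[d_gt0 d_lt1] := d01.
have zero_D : unit_disk (0 : R[i]) by change (cabs (0 : R[i]) < 1); rewrite cabs0.
have duD : unit_disk (d%:C * u) by rewrite /unit_disk /= cabs_scale gtr0_norm.
have lower := bD_Tmob_diameter_ge r01 d01.
have upper : bD p 0 (d%:C * u) <= d / ((1 - d) * pnorm2 p 1 1).
  by apply: bD_center_le; rewrite (ltW d_gt0) d_lt1.
have lip := le_trans lower (lipK _ _ zero_D duD).
set M := pnorm2 p 1 1 in lower upper lip; have M_gt0 : 0 < M := pnorm211_gt0 p_gt0.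
have rd_gt0 : 0 < 1 + r * d by rewrite ltr_wpDr // mulr_ge0 // ltW.
have r1_gt0 : 0 < 1 + r by rewrite ltr_wpDr.
have lower_gt0 : 0 < d * (1 + r) / ((1 + r * d) * M) by rewrite divr_gt0 ?mulr_gt0.
have K_gt0 : 0 < K.
  by have := bD_ge0 p_gt0 (d%:C * u) zero_D; have := lt_le_trans lower_gt0 lip; nra.
have := le_trans lip (ler_wpM2l (ltW K_gt0) upper).
set t := d / ((1 + r * d) * (1 - d) * M).
have -> : d * (1 + r) / ((1 + r * d) * M) = (1 + r) * (1 - d) * t.
  by rewrite /t; field; rewrite !lt0r_neq0 ?subr_gt0.
have -> : K * (d / ((1 - d) * M)) = K * (1 + r * d) * t.
  by rewrite /t; field; rewrite !lt0r_neq0 ?subr_gt0.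
by rewrite ler_pM2r // divr_gt0 ?mulr_gt0 ?subr_gt0.
Qed.

End LowerBound.

Lemma ler_slack (R : realFieldType) (x y z : R) :
  (forall d, 0 < d < 1 -> x <= y + d * z) -> x <= y.
Proof.
move=> slack; apply/ler_addgt0Pr => e e_gt0.
have z_ge0 := normr_ge0 z; have den_gt0 : 0 < `|z| + e + e by lra.
set d := e / (`|z| + e + e).
have d_gt0 : 0 < d by rewrite divr_gt0.
have d_lt1 : d < 1 by rewrite ltr_pdivrMr // mul1r; lra.
apply: le_trans (slack d _) _; first by rewrite d_gt0 d_lt1.
rewrite lerD2l; apply: le_trans (ler_wpM2l (ltW d_gt0) (ler_norm z)) _.
rewrite mulrAC ler_pdivrMr // ler_wpM2l; lra.
Qed.

Lemma lip_const_ge (R : realType) (p : \bar R) (a : R[i]) K :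
  (0 < p)%E -> cabs a < 1 -> lip_const p a K -> 1 + cabs a <= K.
Proof.
move=> p_gt0 a_lt1 lipK; have [v v1 a_polar] := cabs_polar a.
have u1 : cabs (- v) = 1 by rewrite cabsN.
have a_eq : a = - ((cabs a)%:C * - v) by rewrite mulrN opprK -a_polar.
rewrite a_eq in lipK.
have := lip_const_diameter p_gt0 u1 _ lipK; rewrite cabs_ge0 a_lt1 => /(_ isT) bound.
by apply: (@ler_slack _ _ _ (1 + cabs a + K * cabs a)) => d /bound; lra.
Qed.

Theorem theorem4p4 (R : realType) (p : \bar R) (a : R[i]) :
  (1%:E <= p)%E -> unit_disk a ->
  1 + cabs a <= Rpa p a.
Proof.
move=> p_ge1 a_lt1; have p_gt0 : (0 < p)%E by apply: lt_le_trans p_ge1.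
apply: lb_le_inf; first by eexists; apply: lip_const_Tmob.
by move=> K; apply: lip_const_ge.
Qed.
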